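(* Let $K$ be a field with $\mathrm{char}(K) = 0$ or $\mathrm{char}(K) > n$. Let $f \in K[x_1,\dots,x_n]$ be a homogeneous polynomial of degree $d$ all of whose terms are square-free. If $f(1,1,\dots,1) \neq 0$ in $K$, then for every $N \ge n+d$, in the polynomial ring $K[x_1,\dots,x_N]$ one has $$(S_N.f) = (S_N.\,x_1x_2\cdots x_d).$$ Conversely, if $f(1,1,\dots,1) = 0$ in $K$, then for every $N \ge n$ the radical $\sqrt{(S_N.f)}\subseteq K[x_1,\dots,x_N]$ contains no monomial.
   Context: $S_N$ acts on $K[x_1,\dots,x_N]$ by $\sigma.x_i = x_{\sigma(i)}$; $f$ is viewed as an element of $K[x_1,\dots,x_N]$ for $N\ge n$; $(S_N.f)$ is the ideal generated by the orbit of $f$, and $(S_N.\,x_1\cdots x_d)$ is the ideal generated by all square-free monomials of degree $d$ in $x_1,\dots,x_N$. *)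

From HB Require Import structures.
From mathcomp Require Import all_boot all_order all_fingroup all_algebra.
From mathcomp Require Import mpoly.
Set Implicit Arguments. Unset Strict Implicit. Unset Printing Implicit Defensive.
Import GRing.Theory.
Local Open Scope ring_scope.

Definition ideal_gen (K : fieldType) (N : nat) (S : {mpoly K[N]} -> Prop)
  (p : {mpoly K[N]}) : Prop :=
  exists hs : seq ({mpoly K[N]} * {mpoly K[N]}),
    (forall hg, hg \in hs -> S hg.2) /\ p = \sum_(hg <- hs) hg.1 * hg.2.

Definition sym_orbit (K : fieldType) (N : nat) (g : {mpoly K[N]}) (q : {mpoly K[N]}) : Prop :=
  exists s : 'S_N, q = msym s g.

Definition orbit_ideal (K : fieldType) (N : nat) (g : {mpoly K[N]}) :=
  ideal_gen (sym_orbit g).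

(* the monomial x_1 x_2 ... x_d in K[x_1..x_N] (0-indexed variables 0..d-1) *)
Definition sqfree_prod (K : fieldType) (N d : nat) : {mpoly K[N]} :=
  \prod_(i < N | (i < d)%N) 'X_i.

Definition radical (K : fieldType) (N : nat) (I : {mpoly K[N]} -> Prop)
  (p : {mpoly K[N]}) : Prop := exists k : nat, I (p ^+ k).

(* Embedding K[x_1..x_n] -> K[x_1..x_N] sending x_i to x_i (for N >= n);
   variables with index >= N would be sent to 0, which never happens when n <= N. *)
Definition embed (K : fieldType) (n N : nat) (f : {mpoly K[n]}) : {mpoly K[N]} :=
  mmap (@mpolyC N K)
    (fun i : 'I_n => match @insub nat (fun k => (k < N)%N) 'I_N (val i) with
                     | Some j => 'X_j | None => 0 end) f.

Definition sqfree_terms (K : fieldType) (n : nat) (f : {mpoly K[n]}) : Prop :=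
  forall m : 'X_{1..n}, m \in msupp f -> forall i : 'I_n, (m i <= 1)%N.

From HB Require Import structures.
From mathcomp Require Import all_boot all_order all_fingroup all_algebra.
From mathcomp Require Import mpoly.
Import GRing.Theory.
Local Open Scope ring_scope.
Set Implicit Arguments. Unset Strict Implicit. Unset Printing Implicit Defensive.

(* Write f = sum_S c_S x_S over d-subsets S of the first n variables, so that
   sum_S c_S = f(1,...,1).  If this sum is nonzero, every square-free monomial of
   degree d lies in I = (S_N.f), by induction on d.  Choose i with
   sum_(S ∋ i) c_S != 0, which exists because sum_i sum_(S ∋ i) c_S = d sum_S c_S
   and d <= n is invertible in K, and a variable y not occurring in f.  Then
   f - (i y).f = (x_i - x_y) g, where g = sum_(S ∋ i) c_S x_(S \ i) has nonzero
   coefficient sum and lies in the colon ideal (I : x_i - x_y), which is stable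
   under the permutations of the remaining variables.  Induction gives
   (x_i - x_y) x_R in I for all (d-1)-sets R avoiding i and y, so by symmetry every
   difference x_S - x_T of degree-d square-free monomials is in I, and finally
   x_T is in I because f - f(1,...,1) x_T = sum_S c_S (x_S - x_T).
   Conversely, evaluation at (1,...,1) vanishes on (S_N.f) when f(1,...,1) = 0,
   but not on any monomial. *)

Section SquareFree.
Variables (K : fieldType) (N : nat).
Implicit Types (I : {mpoly K[N]} -> Prop) (p q : {mpoly K[N]}).
Implicit Types (X A S T R : {set 'I_N}) (c : {set 'I_N} -> K) (i u v y : 'I_N).

Definition is_ideal I :=
  [/\ I 0, forall p q, I p -> I q -> I (p + q) & forall p q, I q -> I (p * q)].

Definition tperm_stable X I :=
  forall u v, u \in X -> v \in X -> forall p, I p -> I (msym (tperm u v) p).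

Definition sqfmono S : {mpoly K[N]} := \prod_(j in S) 'X_j.

Definition sqfpoly c : {mpoly K[N]} := \sum_S c S *: sqfmono S.

Definition supported_on A d c := forall S, c S != 0 -> S \subset A /\ #|S| = d.

Definition link i c R := if i \in R then 0 else c (i |: R).

Definition natr_neq0_upto m := forall k, (0 < k <= m)%N -> k%:R != 0 :> K.

Section Ideal.
Variable I : {mpoly K[N]} -> Prop.
Hypothesis idI : is_ideal I.

Lemma ideal0 : I 0. Proof. by have [] := idI. Qed.

Lemma idealD p q : I p -> I q -> I (p + q). Proof. by case: idI => _ + _; apply. Qed.

Lemma idealMl p q : I q -> I (p * q). Proof. by case: idI => _ _; apply. Qed.

Lemma idealZ a p : I p -> I (a *: p).
Proof. by rewrite -mul_mpolyC; apply: idealMl. Qed.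

Lemma idealB p q : I p -> I q -> I (p - q).
Proof. by move=> Ip Iq; apply: idealD => //; rewrite -scaleN1r; apply: idealZ. Qed.

Lemma ideal_sum (T : Type) (r : seq T) (P : pred T) (F : T -> {mpoly K[N]}) :
  (forall x, P x -> I (F x)) -> I (\sum_(x <- r | P x) F x).
Proof.
move=> IF; elim/big_rec: _ => [|x q Px Iq]; first exact: ideal0.
by apply: idealD => //; apply: IF.
Qed.

Lemma is_ideal_colon q : is_ideal (fun p => I (q * p)).
Proof.
split=> [|p r Ip Ir|p r Ir]; first by rewrite mulr0; apply: ideal0.
  by rewrite mulrDr; apply: idealD.
by rewrite mulrCA; apply: idealMl.
Qed.

End Ideal.

Lemma msymXU (s : 'S_N) i : msym s ('X_i : {mpoly K[N]}) = 'X_(s i).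
Proof. by rewrite /msym mmapX mmap1U. Qed.

Lemma msym_sqfmono (s : 'S_N) S : msym s (sqfmono S) = sqfmono (s @: S).
Proof.
rewrite /sqfmono rmorph_prod big_imset /=; last by move=> x y _ _; apply: perm_inj.
by apply: eq_bigr => j _; rewrite msymXU.
Qed.

Lemma sqfmono_setU1 i R : i \notin R -> sqfmono (i |: R) = 'X_i * sqfmono R.
Proof. by move=> iR; rewrite /sqfmono big_setU1. Qed.

Lemma mem_imset_tperm u v x S : (x \in tperm u v @: S) = (tperm u v x \in S).
Proof. by rewrite -{1}(tpermK u v x) mem_imset //; apply: perm_inj. Qed.

Lemma tperm_in X u v x : u \in X -> v \in X -> (tperm u v x \in X) = (x \in X).
Proof. by move=> uX vX; case: tpermP => [->|->|//]; rewrite ?uX ?vX. Qed.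

Lemma set_exchange_ind X T0 (P : {set 'I_N} -> Prop) :
  P T0 ->
  (forall T u v, T \subset X -> #|T| = #|T0| -> u \in T :\: T0 -> v \in T0 :\: T ->
     P (v |: (T :\ u)) -> P T) ->
  T0 \subset X -> forall T, T \subset X -> #|T| = #|T0| -> P T.
Proof.
move=> P0 Pstep sT0X T sTX cT; move Hk: #|T :\: T0| => k.
elim: k T sTX cT Hk => [|k IHk] T sTX cT Hk.
  have sTT0 : T \subset T0 by rewrite -setD_eq0 -cards_eq0 Hk.
  suff -> : T = T0 by [].
  by apply/eqP; rewrite eqEcard sTT0 cT leqnn.
have [u uTT0] : exists u, u \in T :\: T0 by apply/set0Pn; rewrite -card_gt0 Hk.
have [v vT0T] : exists v, v \in T0 :\: T.
  by apply/set0Pn; rewrite -card_gt0 cardsD setIC -cT -cardsD Hk.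
move: (uTT0) (vT0T); rewrite !inE => /andP[uT0 uT] /andP[vT vT0].
apply: (Pstep T u v) => //; apply: IHk.
- by rewrite subUset sub1set (subsetP sT0X) // (subset_trans (subD1set T u)).
- by rewrite cardsU1 !inE negb_and vT orbT (cardsD1 u T) uT in cT *.
have -> : (v |: T :\ u) :\: T0 = (T :\: T0) :\ u.
  by apply/setP=> x; rewrite !inE; case: eqP => [->|_]; rewrite ?vT0 ?andbF //= andbCA.
by move: Hk; rewrite (cardsD1 u) uTT0 add1n => -[].
Qed.

Lemma sum_setU1_mem (V : nmodType) i (F : {set 'I_N} -> V) :
  \sum_(S : {set 'I_N} | i \in S) F S = \sum_(R : {set 'I_N} | i \notin R) F (i |: R).
Proof.
rewrite (reindex_onto (fun R => i |: R) (fun S => S :\ i)) /=; last first.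
  by move=> S iS; rewrite setD1K.
apply: eq_bigl => R; rewrite setU11 /=.
case: (boolP (i \in R)) => iR; last by rewrite setU1K ?eqxx.
by apply/negbTE/eqP => eR; move: iR; rewrite -eR setD11.
Qed.

Lemma sum_link i c : \sum_R link i c R = \sum_(S : {set 'I_N} | i \in S) c S.
Proof.
rewrite sum_setU1_mem [RHS]big_mkcond /=; apply: eq_bigr => R _.
by rewrite /link; case: (i \in R).
Qed.

Lemma link_supported i A d c :
  supported_on A d.+1 c -> supported_on (A :\ i) d (link i c).
Proof.
move=> hc R; rewrite /link; case: ifP => [_|iR /hc[sA cR]]; first by rewrite eqxx.
split; last by move: cR; rewrite cardsU1 iR add1n => -[].
apply/subsetP=> x xR; rewrite !inE (subsetP sA) ?andbT; last by rewrite !inE xR orbT.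
by apply/eqP=> exi; move: iR; rewrite -exi xR.
Qed.

Lemma sum_mem_supported A d c : supported_on A d c ->
  \sum_(i in A) \sum_(S : {set 'I_N} | i \in S) c S = d%:R * \sum_S c S.
Proof.
move=> hc; under eq_bigr do rewrite big_mkcond /=.
rewrite exchange_big mulr_sumr; apply: eq_bigr => S _.
have [->|/hc[sSA cS]] := eqVneq (c S) 0.
  by rewrite mulr0; apply: big1 => i _; rewrite if_same.
rewrite -big_mkcondr /= (eq_bigl (mem S)) ?sumr_const ?cS ?mulr_natl // => i.
by apply/andP/idP=> [[]//|iS]; rewrite (subsetP sSA).
Qed.

Lemma exists_link_sum_neq0 A d c :
  supported_on A d.+1 c -> natr_neq0_upto #|A| -> \sum_S c S != 0 ->
  exists2 i, i \in A & \sum_R link i c R != 0.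
Proof.
move=> hc hA hs.
have [S0 cS0] : exists S, c S != 0.
  apply/existsP; apply: contraNT hs => /existsPn c0.
  by rewrite big1 // => S _; apply/eqP/negbNE.
have dA : (d.+1 <= #|A|)%N by have [sS0A <-] := hc S0 cS0; apply: subset_leq_card.
apply/exists_inP; apply: contraNT hs => /exists_inPn link0.
have := sum_mem_supported hc; rewrite big1 => [/esym/eqP|i iA]; last first.
  by apply/eqP; rewrite -sum_link; apply/negbNE/link0.
by rewrite mulf_eq0 (negbTE (hA d.+1 dA)).
Qed.

Lemma sqfmono_subr_tperm i y S : y \notin S ->
  sqfmono S - msym (tperm i y) (sqfmono S) =
  if i \in S then ('X_i - 'X_y) * sqfmono (S :\ i) else 0.
Proof.
move=> yS; rewrite msym_sqfmono; case: ifP => iS.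
  have iy : i != y by apply: contraNneq yS => <-.
  have -> : tperm i y @: S = y |: (S :\ i).
    apply/setP=> x; rewrite mem_imset_tperm !inE.
    case: tpermP => [->|->|/eqP xi /eqP xy];
      rewrite ?eqxx ?(negbTE yS) ?(negbTE xi) ?(negbTE xy) //.
    by rewrite (negbTE iy).
  rewrite sqfmono_setU1; last by rewrite !inE (negbTE yS) andbF.
  by rewrite -{1}(setD1K iS) sqfmono_setU1 ?setD11 // -mulrBl.
have -> : tperm i y @: S = S.
  apply/setP=> x; rewrite mem_imset_tperm.
  by case: tpermP => [->|->|] //; rewrite iS (negbTE yS).
by rewrite subrr.
Qed.

Lemma sqfpoly_subr_tperm c i y : (forall S, c S != 0 -> y \notin S) ->
  sqfpoly c - msym (tperm i y) (sqfpoly c) = ('X_i - 'X_y) * sqfpoly (link i c).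
Proof.
move=> cy; rewrite /sqfpoly (raddf_sum (msym (tperm i y))) -sumrB mulr_sumr.
rewrite [RHS](eq_bigr (fun R => if i \notin R
    then c (i |: R) *: (('X_i - 'X_y) * sqfmono ((i |: R) :\ i)) else 0)); last first.
  move=> R _; rewrite /link; case: ifP => iR /=; first by rewrite scale0r mulr0.
  by rewrite setU1K ?iR // scalerAr.
rewrite -big_mkcond -(sum_setU1_mem i (fun S => c S *: (('X_i - 'X_y) * sqfmono (S :\ i)))) /=.
rewrite [RHS]big_mkcond; apply: eq_bigr => S _; rewrite msymZ -scalerBr.
have [->|/cy yS] := eqVneq (c S) 0; first by rewrite !scale0r if_same.
by rewrite sqfmono_subr_tperm //; case: ifP; rewrite ?scaler0.
Qed.

Lemma sqfmono_in_ideal_of_diff I X A d c :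
  is_ideal I -> A \subset X -> supported_on A d c -> \sum_S c S != 0 ->
  I (sqfpoly c) ->
  (forall S T, S \subset X -> T \subset X -> #|S| = d -> #|T| = d ->
     I (sqfmono S - sqfmono T)) ->
  forall T, T \subset X -> #|T| = d -> I (sqfmono T).
Proof.
move=> idI sAX hc hs Ic Idiff T sTX cT.
have Idev : I (sqfpoly c - (\sum_S c S) *: sqfmono T).
  rewrite /sqfpoly scaler_suml -sumrB; apply: (ideal_sum idI) => S _.
  rewrite -scalerBr; have [->|/hc[sSA cS]] := eqVneq (c S) 0.
    by rewrite scale0r; apply: ideal0.
  exact/(idealZ idI)/Idiff/cT/cS/sTX/(subset_trans sSA sAX).
have ->: sqfmono T = (\sum_S c S)^-1 *: (sqfpoly c - (sqfpoly c - (\sum_S c S) *: sqfmono T)).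
  by rewrite opprB addrC subrK scalerK.
exact/(idealZ idI)/(idealB idI).
Qed.

Lemma sqfmono_diff_in_ideal I X d :
  is_ideal I ->
  (forall u v R, u \in X -> v \in X -> u != v -> R \subset X ->
     u \notin R -> v \notin R -> #|R| = d -> I (('X_u - 'X_v) * sqfmono R)) ->
  forall S T, S \subset X -> T \subset X -> #|S| = d.+1 -> #|T| = d.+1 ->
    I (sqfmono S - sqfmono T).
Proof.
move=> idI Imul S T sSX sTX cS cT.
apply: (@set_exchange_ind X S (fun T => I (sqfmono S - sqfmono T))) => //=.
- by rewrite subrr; apply: ideal0.
- move=> {sTX cT}T u v sTX cT /setDP[uT uS] /setDP[vS vT] IT'.
  have uTu : u \notin T :\ u by rewrite setD11.
  have vTu : v \notin T :\ u by rewrite !inE (negbTE vT) andbF.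
  have -> : sqfmono S - sqfmono T =
      (sqfmono S - sqfmono (v |: T :\ u)) + (sqfmono (v |: T :\ u) - sqfmono T).
    by rewrite addrA subrK.
  apply: (idealD idI IT').
  rewrite sqfmono_setU1 // -{2}(setD1K uT) sqfmono_setU1 // -mulrBl.
  apply: Imul => //; first exact: (subsetP sSX).
  + exact: (subsetP sTX).
  + by apply: contraNneq vT => ->.
  + exact: subset_trans (subD1set T u) sTX.
  by move: cT; rewrite cS (cardsD1 u) uT add1n => -[].
by rewrite cT cS.
Qed.

Lemma tperm_stable_colon X I i y : tperm_stable X I ->
  tperm_stable (X :\ i :\ y) (fun p => I (('X_i - 'X_y) * p)).
Proof.
move=> stI u v; rewrite !inE => /and3P[uy ui uX] /and3P[vy vi vX] p Ip.
by have := stI u v uX vX _ Ip; rewrite msymM msymB !msymXU !tpermD // eq_sym.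
Qed.

Lemma subX_mul_sqfmono_tperm I X d i y :
  tperm_stable X I -> i \in X -> y \in X -> i != y ->
  (forall R, R \subset X :\ i :\ y -> #|R| = d -> I (('X_i - 'X_y) * sqfmono R)) ->
  forall u v R, u \in X -> v \in X -> u != v -> R \subset X ->
    u \notin R -> v \notin R -> #|R| = d -> I (('X_u - 'X_v) * sqfmono R).
Proof.
move=> stI iX yX iy Iiy u v R uX vX uv sRX uR vR cR.
(* t2 * t1 maps i to u and y to v; R0 is the preimage of R under it. *)
pose t1 := tperm i u; pose w := t1 y; pose t2 := tperm w v.
have wX : w \in X by rewrite /w tperm_in.
have wu : w != u.
  by apply: contraNneq iy => ewu; apply/eqP/(@perm_inj _ t1); rewrite [t1 i]tpermL -ewu.
have t2u : t2 u = u by rewrite /t2 tpermD // eq_sym.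
pose R0 := t1 @: (t2 @: R).
have sR0 : R0 \subset X :\ i :\ y.
  apply/subsetP=> x; rewrite !mem_imset_tperm !inE => xR.
  have := subsetP sRX _ xR; rewrite /t2 tperm_in // /t1 tperm_in // => ->.
  rewrite andbT; apply/andP; split.
    by apply: contraNneq vR => exy; move: xR; rewrite exy -/w /t2 tpermL.
  by apply: contraNneq uR => exi; move: xR; rewrite exi /t1 tpermL t2u.
have cR0 : #|R0| = d by rewrite !card_imset //; apply: perm_inj.
have := stI w v wX vX _ (stI i u iX uX _ (Iiy R0 sR0 cR0)).
rewrite !msymM !msymB !msymXU !msym_sqfmono -/t1 tpermL -/w -/t2 t2u /t2 tpermL.
congr (I (_ * sqfmono _)); apply/setP=> x.
by rewrite !mem_imset_tperm !tpermK.
Qed.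

Lemma sqfmono_in_ideal d X A I c :
  is_ideal I -> tperm_stable X I -> A \subset X -> (#|A| + d <= #|X|)%N ->
  natr_neq0_upto #|A| -> supported_on A d c -> \sum_S c S != 0 ->
  I (sqfpoly c) ->
  forall T, T \subset X -> #|T| = d -> I (sqfmono T).
Proof.
elim: d X A I c => [|d IHd] X A I c idI stI sAX cAX hA hc hs Ic.
  apply: (sqfmono_in_ideal_of_diff idI sAX hc hs Ic) => S T _ _ /cards0_eq-> /cards0_eq->.
  by rewrite subrr; apply: ideal0.
apply: (sqfmono_in_ideal_of_diff idI sAX hc hs Ic).
apply: (sqfmono_diff_in_ideal idI).
have [i iA hi] := exists_link_sum_neq0 hc hA hs.
have [y /setDP[yX yA]] : exists y, y \in X :\: A.
  apply/set0Pn; rewrite -card_gt0 cardsD (setIidPr sAX) subn_gt0.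
  by rewrite (leq_trans _ cAX) // addnS ltnS leq_addr.
have iX := subsetP sAX i iA.
have iy : i != y by apply: contraNneq yA => <-.
apply: (subX_mul_sqfmono_tperm stI iX yX iy).
(* Since y occurs in no support set,
   sqfpoly c - (i y).sqfpoly c = (x_i - x_y) * sqfpoly (link i c), so the induction
   runs in the colon ideal (I : x_i - x_y) on the variables X minus {i, y}. *)
apply: (IHd (X :\ i :\ y) (A :\ i) (fun p => I (('X_i - 'X_y) * p)) (link i c)) => //.
- exact: is_ideal_colon.
- exact: tperm_stable_colon.
- apply/subsetP=> x; rewrite !inE => /andP[xi xA]; rewrite xi (subsetP sAX) //= andbT.
  by apply: contraNneq yA => <-.
- move: cAX; rewrite (cardsD1 i A) (cardsD1 i X) (cardsD1 y (X :\ i)).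
  rewrite iA iX !inE yX eq_sym iy /=.
  by rewrite !add1n addSn addnS !ltnS.
- move=> k /andP[k0 kA]; apply: hA; rewrite k0 (leq_trans kA) //.
  exact/subset_leq_card/subD1set.
- exact: link_supported.
rewrite /= -sqfpoly_subr_tperm; first exact/(idealB idI)/(stI _ _ iX yX).
by move=> S /hc[sSA _]; exact: contra (subsetP sSA y) yA.
Qed.

Lemma sqfpoly_in_ideal I A d c :
  is_ideal I -> supported_on A d c -> (forall T, #|T| = d -> I (sqfmono T)) ->
  I (sqfpoly c).
Proof.
move=> idI hc Id; apply: (ideal_sum idI) => S _.
have [->|/hc[_ /Id IS]] := eqVneq (c S) 0; last exact: idealZ.
by rewrite scale0r; apply: ideal0.
Qed.

Lemma sqfmono_card_in I T0 :
  (forall (s : 'S_N) p, I p -> I (msym s p)) -> I (sqfmono T0) ->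
  forall T, #|T| = #|T0| -> I (sqfmono T).
Proof.
move=> stI IT0 T cT.
apply: (@set_exchange_ind setT T0 (fun T => I (sqfmono T))) => //; try exact: subsetT.
move=> {cT}T u v _ _ /setDP[uT _] /setDP[_ vT] IT'.
suff -> : T = tperm u v @: (v |: T :\ u) by rewrite -msym_sqfmono; apply: stI.
apply/setP=> x; rewrite mem_imset_tperm !inE.
case: tpermP => [->|->|/eqP xu /eqP xv]; rewrite ?eqxx ?uT ?(negbTE vT) //=.
  by rewrite orbF; apply/esym/negbTE; apply: contraNneq vT => <-.
by rewrite (negbTE xv) xu.
Qed.

End SquareFree.

Section OrbitIdeal.
Variables (K : fieldType) (N : nat).
Implicit Types (g p : {mpoly K[N]}) (I : {mpoly K[N]} -> Prop).

Lemma is_ideal_orbit g : is_ideal (orbit_ideal g).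
Proof.
split=> [|p q [hs [hsg ->]] [hs' [hsg' ->]]|p q [hs [hsg ->]]].
- by exists [::]; rewrite big_nil.
- exists (hs ++ hs'); rewrite big_cat; split=> // hg.
  by rewrite mem_cat => /orP[/hsg|/hsg'].
exists [seq (p * hg.1, hg.2) | hg <- hs]; split.
  by move=> hg /mapP[hg' /hsg ? ->].
by rewrite big_map mulr_sumr; apply: eq_bigr => hg _; rewrite mulrA.
Qed.

Lemma orbit_ideal_msym g (s : 'S_N) p : orbit_ideal g p -> orbit_ideal g (msym s p).
Proof.
move=> [hs [hsg ->]]; exists [seq (msym s hg.1, msym s hg.2) | hg <- hs]; split.
  by move=> hg /mapP[hg' /hsg[t ->] ->]; exists (t * s)%g; rewrite msymMm.
by rewrite (raddf_sum (msym s)) big_map; apply: eq_bigr => hg _ /=; rewrite msymM.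
Qed.

Lemma orbit_ideal_self g : orbit_ideal g g.
Proof.
exists [:: (1, g)]; rewrite big_seq1 mul1r; split=> // hg.
by rewrite inE => /eqP-> /=; exists 1%g; rewrite msym1m.
Qed.

Lemma orbit_ideal_min g I :
  is_ideal I -> (forall (s : 'S_N) p, I p -> I (msym s p)) -> I g ->
  forall p, orbit_ideal g p -> I p.
Proof.
move=> idI stI Ig p [hs [hsg ->]]; rewrite big_seq; apply: (ideal_sum idI) => hg.
by move=> /hsg[s ->]; apply/(idealMl idI)/stI.
Qed.

Lemma meval1_msym (s : 'S_N) p : meval (fun _ => 1) (msym s p) = meval (fun _ => 1) p.
Proof.
rewrite [in LHS](mpolyE p) (raddf_sum (msym s)) raddf_sum [RHS]mevalE.
apply: eq_bigr => m _ /=; rewrite msymZ msymX mevalZ mevalX.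
by congr (_ * _); rewrite !big1 // => i _; rewrite expr1n.
Qed.

Lemma meval1_sqfpoly (c : {set 'I_N} -> K) : meval (fun _ => 1) (sqfpoly c) = \sum_S c S.
Proof.
rewrite raddf_sum; apply: eq_bigr => S _ /=.
by rewrite mevalZ rmorph_prod big1 ?mulr1 // => i _ /=; rewrite mevalXU.
Qed.

Lemma radical_orbit_ideal_monomial g (m : 'X_{1..N}) :
  meval (fun _ => 1) g = 0 -> ~ radical (orbit_ideal g) 'X_[m].
Proof.
move=> g1 [k Ik].
have idE : is_ideal (fun p => meval (fun _ => 1) p = 0).
  split=> [|p q|p q] /=; first exact: meval0.
    by rewrite mevalD => -> ->; rewrite addr0.
  by rewrite mevalM => ->; rewrite mulr0.
have := orbit_ideal_min idE (fun s p => etrans (meval1_msym s p)) g1 Ik.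
rewrite mpolyXn mevalX big1 => [/eqP|i _]; last exact: expr1n.
by rewrite oner_eq0.
Qed.

End OrbitIdeal.

Section Embedding.
Variables (K : fieldType) (n N : nat) (le_nN : (n <= N)%N) (f : {mpoly K[n]}).

Definition embed_vars : {set 'I_N} := widen_ord le_nN @: [set: 'I_n].

Definition embed_set (m : 'X_{1..n}) : {set 'I_N} :=
  widen_ord le_nN @: [set i | m i != 0%N].

Definition embed_coef (S : {set 'I_N}) : K :=
  \sum_(m <- msupp f | embed_set m == S) f@_m.

Lemma widen_ord_inj : injective (widen_ord le_nN).
Proof. by move=> i j /(congr1 val) /= /val_inj. Qed.

Lemma card_embed_vars : #|embed_vars| = n.
Proof. by rewrite card_imset ?cardsT ?card_ord //; apply: widen_ord_inj. Qed.

Lemma sum_embed_fibers (V : nmodType) (F : 'X_{1..n} -> V) :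
  \sum_S \sum_(m <- msupp f | embed_set m == S) F m = \sum_(m <- msupp f) F m.
Proof. by rewrite [RHS](partition_big embed_set xpredT). Qed.

Lemma sum_embed_coef : \sum_S embed_coef S = meval (fun _ => 1) f.
Proof.
rewrite sum_embed_fibers mevalE; apply: eq_bigr => m _.
by rewrite big1 ?mulr1 // => i _; rewrite expr1n.
Qed.

Lemma embed_widen :
  embed N f = mmap (@mpolyC N K) (fun i => 'X_(widen_ord le_nN i)) f.
Proof.
apply: eq_bigr => m _; congr (_ * _); apply: mmap1_eq => i /=.
case: insubP => [j _ ej|]; last by rewrite (leq_trans (ltn_ord i) le_nN).
by congr 'X_(_); apply: val_inj.
Qed.

Lemma mmap1_widen (m : 'X_{1..n}) : (forall i, m i <= 1)%N ->
  mmap1 (fun i => 'X_(widen_ord le_nN i)) m = sqfmono K (embed_set m).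
Proof.
move=> m01; rewrite /mmap1 /sqfmono big_imset /=; last first.
  by move=> i j _ _; apply: widen_ord_inj.
rewrite [RHS]big_mkcond /=; apply: eq_bigr => i _; rewrite inE.
by have := m01 i; case: (m i) => [|[|]].
Qed.

Lemma embed_sqfpoly : sqfree_terms f -> embed N f = sqfpoly embed_coef.
Proof.
move=> f_sqf.
transitivity (\sum_(m <- msupp f) f@_m *: sqfmono K (embed_set m)).
  rewrite embed_widen /mmap; apply: eq_big_seq => m mf.
  by rewrite mul_mpolyC mmap1_widen //; apply: f_sqf.
rewrite -sum_embed_fibers /sqfpoly; apply: eq_bigr => S _.
by rewrite scaler_suml; apply: eq_bigr => m /eqP->.
Qed.

Lemma embed_coef_supported d :
  sqfree_terms f -> f \is d.-homog -> supported_on embed_vars d embed_coef.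
Proof.
move=> f_sqf f_hom S; rewrite /embed_coef.
have [/hasP[m mf /eqP<-] _|/hasPn no_m] := boolP (has (fun m => embed_set m == S) (msupp f)).
  split; first exact/imsetS/subsetT.
  rewrite card_imset; last exact: widen_ord_inj.
  rewrite -(dhomog_mf f_hom mf) /= mdegE -sum1_card big_mkcond /=.
  by apply: eq_bigr => i _; rewrite inE; have := f_sqf m mf i; case: (m i) => [|[|]].
by rewrite big_seq_cond big1 ?eqxx // => m /andP[/no_m/negbTE->].
Qed.

End Embedding.

Lemma natr_neq0_upto_pchar (K : fieldType) n :
  [pchar K] =i pred0 \/ (forall p, p \in [pchar K] -> (n < p)%N) ->
  natr_neq0_upto K n.
Proof.
move=> hK k /andP[k_gt0 le_kn]; apply/negP => k0.
have [p pK] := natf0_pchar k_gt0 k0.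
have p_dvd_k : (p %| k)%N by rewrite (dvdn_pcharf pK) k0.
case: hK => [K0|Kgt]; first by rewrite K0 in pK.
have := leq_trans (Kgt p pK) (leq_trans (dvdn_leq k_gt0 p_dvd_k) le_kn).
by rewrite ltnn.
Qed.

Lemma sqfree_prod_sqfmono (K : fieldType) N d :
  sqfree_prod K N d = sqfmono K [set i : 'I_N | (i < d)%N].
Proof. by apply: eq_bigl => i; rewrite inE. Qed.

Lemma card_set_ltn N d : (d <= N)%N -> #|[set i : 'I_N | (i < d)%N]| = d.
Proof.
move=> le_dN; rewrite -[RHS](card_embed_vars le_dN); congr #|pred_of_set _|.
apply/setP=> i; rewrite inE; apply/idP/imsetP => [lt_id|[j _ ->]]; last exact: (ltn_ord j).
by exists (Ordinal lt_id) => //; apply: val_inj.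
Qed.

Lemma sqfmono_in_orbit_embed (K : fieldType) (n N d : nat) (f : {mpoly K[n]}) :
  natr_neq0_upto K n -> f \is d.-homog -> sqfree_terms f ->
  meval (fun _ => 1) f != 0 -> (n + d <= N)%N ->
  forall T : {set 'I_N}, #|T| = d -> orbit_ideal (embed N f) (sqfmono K T).
Proof.
move=> hK f_hom f_sqf f1 le_ndN T cT.
have le_nN : (n <= N)%N := leq_trans (leq_addr d n) le_ndN.
apply: (@sqfmono_in_ideal _ _ d setT (embed_vars le_nN) _ (embed_coef le_nN f)) => //.
- exact: is_ideal_orbit.
- by move=> u v _ _; apply: orbit_ideal_msym.
- by rewrite card_embed_vars cardsT card_ord.
- by rewrite card_embed_vars.
- exact: embed_coef_supported.
- by rewrite sum_embed_coef.
- by rewrite -embed_sqfpoly //; apply: orbit_ideal_self.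
Qed.

Theorem theorem1p7 (K : fieldType) (n d : nat) (f : {mpoly K[n]}) :
  ([pchar K] =i pred0 \/ (forall p : nat, p \in [pchar K] -> (n < p)%N)) ->
  f \is d.-homog ->
  sqfree_terms f ->
  (meval (fun _ => 1) f != 0 ->
     forall N : nat, (n + d <= N)%N ->
       forall p : {mpoly K[N]},
         orbit_ideal (embed N f) p <-> orbit_ideal (sqfree_prod K N d) p)
  /\
  (meval (fun _ => 1) f = 0 ->
     forall N : nat, (n <= N)%N ->
       forall m : 'X_{1..N}, ~ radical (orbit_ideal (embed N f)) 'X_[m]).
Proof.
move=> hK f_hom f_sqf; split=> [f1 N le_ndN p|f1 N le_nN m]; last first.
  apply: radical_orbit_ideal_monomial.
  by rewrite (embed_sqfpoly le_nN f_sqf) meval1_sqfpoly sum_embed_coef.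
have le_nN : (n <= N)%N := leq_trans (leq_addr d n) le_ndN.
have cT0 := card_set_ltn (leq_trans (leq_addl n d) le_ndN).
rewrite sqfree_prod_sqfmono; split; apply: orbit_ideal_min;
  try solve [exact: is_ideal_orbit | exact: orbit_ideal_msym].
  rewrite (embed_sqfpoly le_nN f_sqf).
  have f_supp := embed_coef_supported (le_nN := le_nN) f_sqf f_hom.
  apply: (sqfpoly_in_ideal (is_ideal_orbit _) f_supp).
  move=> T cT.
  by apply: (sqfmono_card_in (@orbit_ideal_msym _ _ _) (orbit_ideal_self _)); rewrite cT cT0.
by apply: (@sqfmono_in_orbit_embed K n N d) => //; apply: natr_neq0_upto_pchar.
Qed.
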